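(* For every $n\ge1$, every $f\colon\mathbb F_2^n\to\mathbb R$, every $\epsilon> 0$ and every $\delta\in(0,1/2]$ such that $\xi:=\|f\|_2^2-\epsilon(1+2\delta)>0$, it holds that $\mathcal D^{\to,U}_{\epsilon}(f^+)\ge \frac{\delta}{2}\cdot\dim_{\xi}(f)$.
   Context: Fourier analysis: for $\alpha\in\mathbb F_2^n$ let $\chi_\alpha(x)=(-1)^{\sum_i\alpha_i x_i}$; $\hat f(\alpha)=\mathbb E_{x\sim U(\mathbb F_2^n)}[f(x)\chi_\alpha(x)]$; $\|f\|_2^2=\mathbb E_x[f(x)^2]$. Approximate Fourier dimension: for $\xi\in(0,\|f\|_2^2]$, $\dim_\xi(f)$ is the minimum $k$ such that there exists a linear subspace $A\subseteq\mathbb F_2^n$ of dimension $k$ with $\sum_{\alpha\in A}\hat f(\alpha)^2\ge\xi$. The XOR-function of $f$ is $f^+(x,y)=f(x+y)$ for $x,y\in\mathbb F_2^n$ (addition mod 2). Distributional one-way communication complexity under the uniform distribution: $\mathcal D^{\to,U}_\epsilon(f^+)$ is the minimum, over deterministic one-way protocols $\Pi$ in which Alice (holding $x$) sends a single message $M(x)$ to Bob (holding $y$) who then outputs a real number $\Pi(x,y)$ depending only on $M(x)$ and $y$, satisfying $\mathbb E_{x,y\sim U(\mathbb F_2^n)}[(\Pi(x,y)-f^+(x,y))^2]\le\epsilon$, of the maximum length in bits of Alice's message. *)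

From HB Require Import structures.
From mathcomp Require Import all_boot all_order all_algebra.
From Stdlib Require Import Reals.

Set Implicit Arguments.
Unset Strict Implicit.
Unset Printing Implicit Defensive.
Local Open Scope R_scope.

Definition F2n (n : nat) := 'rV['F_2]_n.

Definition rsum (T : finType) (P : pred T) (g : T -> R) : R :=
  \big[Rplus/0]_(x : T | P x) g x.

Definition Ex (n : nat) (g : F2n n -> R) : R :=
  rsum predT g / 2 ^ n.

Definition ip (n : nat) (a x : F2n n) : 'F_2 :=
  \big[GRing.add/GRing.zero]_(i < n) GRing.mul (a ord0 i) (x ord0 i).

Definition chi (n : nat) (a : F2n n) (x : F2n n) : R :=
  if ip a x == GRing.zero then 1 else -1.

Definition fhat (n : nat) (f : F2n n -> R) (a : F2n n) : R :=
  Ex (fun x => (f x * chi a x)).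

Definition norm2sq (n : nat) (f : F2n n -> R) : R :=
  Ex (fun x => (f x * f x)).

Definition fweight (n : nat) (f : F2n n -> R) (A : {vspace F2n n}) : R :=
  rsum (fun a => a \in A) (fun a => (fhat f a * fhat f a)).

Definition is_approx_fdim (n : nat) (f : F2n n -> R) (xi : R) (k : nat) : Prop :=
  (exists A : {vspace F2n n}, \dim A = k /\ (xi <= fweight f A)) /\
  (forall A : {vspace F2n n}, (xi <= fweight f A) -> leq k (\dim A)).

Definition xorf (n : nat) (f : F2n n -> R) (x y : F2n n) : R := f (GRing.add x y).

(* A deterministic one-way protocol: Alice sends the bit string M x,
   Bob outputs B (M x) y. *)
Definition cost (n : nat) (M : F2n n -> seq bool) : nat :=
  \max_(x : F2n n) size (M x).

Definition proto_err (n : nat) (f : F2n n -> R)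
    (M : F2n n -> seq bool) (B : seq bool -> F2n n -> R) : R :=
  Ex (fun x => Ex (fun y => ((B (M x) y - xorf f x y) ^ 2))).

Definition is_D1wayU (n : nat) (f : F2n n -> R) (eps : R) (d : nat) : Prop :=
  (exists (M : F2n n -> seq bool) (B : seq bool -> F2n n -> R),
      cost M = d /\ (proto_err f M B <= eps)) /\
  (forall (M : F2n n -> seq bool) (B : seq bool -> F2n n -> R),
      (proto_err f M B <= eps) -> leq d (cost M)).

From HB Require Import structures.
From mathcomp Require Import all_boot all_order all_algebra.
From Stdlib Require Import Reals Lra Psatz Factorial Wf_nat Classical.
From Coquelicot Require Coquelicot.

(* For a character chi_a let
   retained M a := E_x[(E[chi_a | M])(x)^2] be the part of chi_a surviving
   the averaging over classes of inputs on which Alice sends the same message.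
   1. (err_bound) sum_a fhat(a)^2 (1 - retained M a) <= error: by Parseval,
      Bob's best guess at a frequency a is the class average of fhat(a) chi_a.
   2. (heavy_weight) Hence the span of the heavy characters, those with
      retained M a >= sigma := 2 delta / (1 + 2 delta), has Fourier weight
      >= |f|^2 - eps (1 + 2 delta) = xi.
   3. (level1_sum) For linearly independent Y, sum_(a in Y) retained M a <=
      2 ln N, N the number of distinct messages: Jensen's inequality with
      cosh t <= exp (t^2 / 2) and the orthogonality of characters; so the
      heavy span has dimension at most 2 ln N / sigma (heavy_dim).
   4. (messages_count) N < 2^(d + 1), and elementary bounds on ln turn
      sigma dim <= 2 ln N into delta / 2 * dim <= d (dim_bound_arith). *)

Set Implicit Arguments.
Unset Strict Implicit.
Unset Printing Implicit Defensive.
Local Open Scope R_scope.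

HB.instance Definition _ :=
  Monoid.isComLaw.Build R 0 Rplus (fun a b c => esym (Rplus_assoc a b c))
    Rplus_comm Rplus_0_l.

Section RealSums.
Variable I : Type.
Implicit Types (r : seq I) (P : pred I) (F G : I -> R).

Lemma rsum_mulr r P F c :
  \big[Rplus/0]_(i <- r | P i) F i * c = \big[Rplus/0]_(i <- r | P i) (F i * c).
Proof.
apply: (big_rec2 (fun a b => a * c = b)); first lra.
by move=> i a b _ <-; lra.
Qed.

Lemma rsum_mull r P F c :
  c * \big[Rplus/0]_(i <- r | P i) F i = \big[Rplus/0]_(i <- r | P i) (c * F i).
Proof.
apply: (big_rec2 (fun a b => c * a = b)); first lra.
by move=> i a b _ <-; lra.
Qed.

Lemma rsum_sub r P F G :
  \big[Rplus/0]_(i <- r | P i) (F i - G i) =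
  \big[Rplus/0]_(i <- r | P i) F i - \big[Rplus/0]_(i <- r | P i) G i.
Proof.
rewrite /Rminus big_split /=; congr (_ + _).
apply: esym; apply: (big_rec2 (fun a b => - a = b)); first lra.
by move=> i a b _ <-; lra.
Qed.

Lemma rsum_le r P F G :
  (forall i, P i -> F i <= G i) ->
  \big[Rplus/0]_(i <- r | P i) F i <= \big[Rplus/0]_(i <- r | P i) G i.
Proof.
move=> FG; apply: (big_rec2 (fun a b => a <= b)); first lra.
by move=> i a b /FG; lra.
Qed.

Lemma rsum_ge0 r P F :
  (forall i, P i -> 0 <= F i) -> 0 <= \big[Rplus/0]_(i <- r | P i) F i.
Proof.
move=> F0; apply: (big_rec (fun a => 0 <= a)); first lra.
by move=> i a /F0; lra.
Qed.

Lemma rsum_const_seq r c : \big[Rplus/0]_(i <- r) c = INR (size r) * c.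
Proof.
elim: r => [|i r IH]; first by rewrite big_nil /=; lra.
rewrite big_cons IH; have -> : size (i :: r) = (size r).+1 by []; rewrite S_INR; lra.
Qed.

End RealSums.

Lemma rsum_distr (I J : Type) (r : seq I) (s : seq J) (P : pred I) (P' : pred J)
    (F : I -> R) (G' : J -> R) :
  (\big[Rplus/0]_(i <- r | P i) F i) * (\big[Rplus/0]_(j <- s | P' j) G' j) =
  \big[Rplus/0]_(i <- r | P i) \big[Rplus/0]_(j <- s | P' j) (F i * G' j).
Proof. by rewrite rsum_mulr; apply: eq_bigr => i _; rewrite rsum_mull. Qed.

Lemma rsum_le_seq (I : eqType) (r : seq I) (F G : I -> R) :
  (forall i, i \in r -> F i <= G i) ->
  \big[Rplus/0]_(i <- r) F i <= \big[Rplus/0]_(i <- r) G i.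
Proof. by move=> FG; rewrite big_seq [X in _ <= X]big_seq; apply: rsum_le. Qed.

Lemma rsum_const (T : finType) (P : pred T) (c : R) :
  \big[Rplus/0]_(x | P x) c = INR #|P| * c.
Proof.
rewrite big_const; elim: #|P| => [|m IH]; first by rewrite /=; lra.
by rewrite iterS IH S_INR; lra.
Qed.

Lemma rsum_le_subpred (T : finType) (P P' : pred T) (F : T -> R) :
  (forall a, P a -> P' a) -> (forall a, 0 <= F a) ->
  \big[Rplus/0]_(a | P a) F a <= \big[Rplus/0]_(a | P' a) F a.
Proof.
move=> PP' F0; rewrite big_mkcond [X in _ <= X]big_mkcond /=.
apply: rsum_le => a _; case Pa: (P a); first by rewrite (PP' a Pa); lra.
by case: (P' a); [apply: F0 | lra].
Qed.

Module CoshBound.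
Import Coquelicot.Coquelicot.

(* 2^k k! <= (2k)!, comparing the Taylor coefficients of exp (t^2/2) and cosh. *)
Lemma pow2_fact_le (k : nat) :
  2 ^ k * INR (fact k) <= INR (fact (Nat.mul 2 k)).
Proof.
elim: k => [|k IH]; first by rewrite /=; lra.
have -> : Nat.mul 2 k.+1 = (Nat.mul 2 k).+2 by lia.
rewrite !fact_simpl !mult_INR !S_INR [2 ^ k.+1]/= mult_INR.
have := pos_INR k; have : 0 <= 2 ^ k * INR (fact k).
  by apply: Rmult_le_pos; [apply: pow_le; lra | apply: pos_INR].
rewrite [INR 2]/=; nra.
Qed.

(* The sub-Gaussian bound on cosh, by termwise comparison of the power series:
   cosh t = sum t^(2k)/(2k)!  and  exp (t^2/2) = sum t^(2k)/(2^k k!). *)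
Lemma cosh_le_exp_sq (t : R) : cosh t <= exp (t * t / 2).
Proof.
set a := fun m : nat => / INR (fact m).
set b := fun k : nat => (t * t / 2) ^ k / INR (fact k).
set ce := fun k : nat => (t * t) ^ k / INR (fact (Nat.mul 2 k)).
set co := fun k : nat => (t * t) ^ k / INR (fact (Nat.add (Nat.mul 2 k) 1)).
have fact_pos m : 0 < INR (fact m) by apply: lt_0_INR; apply: lt_O_fact.
have tt0 : 0 <= t * t by nra.
have Hb : is_series b (exp (t * t / 2)).
  apply: is_series_ext (is_exp_Reals (t * t / 2)) => k.
  by rewrite pow_n_pow /b /scal /= /mult.
have ce_le_b k : 0 <= ce k <= b k.
  rewrite /ce /b /Rdiv [(t * t * / 2) ^ k]Rpow_mult_distr pow_inv.
  have p2 : 0 < 2 ^ k by apply: pow_lt; lra.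
  have p4 := fact_pos (Nat.mul 2 k); have := pow2_fact_le k.
  split; first by apply: Rmult_le_pos; [apply: pow_le | apply/Rlt_le/Rinv_0_lt_compat].
  rewrite Rmult_assoc; apply: Rmult_le_compat_l; first exact: pow_le.
  rewrite -Rinv_mult; apply: Rinv_le_contravar => //; have := fact_pos k; nra.
have co_le_ce k : 0 <= co k <= ce k.
  rewrite /co /ce /Rdiv; have p4 := fact_pos (Nat.mul 2 k); split.
    by apply: Rmult_le_pos; [apply: pow_le | apply/Rlt_le/Rinv_0_lt_compat].
  apply: Rmult_le_compat_l; first exact: pow_le.
  apply: Rinv_le_contravar => //.
  rewrite Nat.add_1_r fact_simpl mult_INR S_INR; have := pos_INR (Nat.mul 2 k); nra.
have ex_ce : ex_series ce.
  apply: (ex_series_le ce b); last by exists (exp (t * t / 2)).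
  by move=> k; rewrite /norm /= /abs /= Rabs_pos_eq; have := ce_le_b k; lra.
have ex_co : ex_series co.
  apply: (ex_series_le co ce) => // k.
  by rewrite /norm /= /abs /= Rabs_pos_eq; have := co_le_ce k; lra.
(* exp s splits into its even and odd parts, for s = t and s = -t *)
have exp_split s : s * s = t * t -> exp s = Series ce + s * Series co.
  move=> ss.
  have Pe : is_pseries (fun k => a (Nat.mul 2 k)) (s ^ 2) (Series ce).
    apply: (is_series_ext ce); last exact: Series_correct.
    by move=> k; rewrite pow_n_pow /ce /scal /= /mult /= /a Rmult_1_r ss.
  have Po : is_pseries (fun k => a (Nat.add (Nat.mul 2 k) 1)) (s ^ 2) (Series co).
    apply: (is_series_ext co); last exact: Series_correct.
    by move=> k; rewrite pow_n_pow /co /scal /= /mult /= /a Rmult_1_r ss.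
  rewrite -(is_pseries_unique _ _ _ (is_pseries_odd_even a s _ _ Pe Po)).
  by rewrite -(is_pseries_unique _ _ _ (is_exp_Reals s)).
have ce_le : Series ce <= exp (t * t / 2).
  rewrite -(is_series_unique _ _ Hb); apply: Series_le; first exact: ce_le_b.
  by exists (exp (t * t / 2)).
rewrite /cosh (exp_split t erefl) (exp_split (- t)); [lra | ring].
Qed.
End CoshBound.

Lemma ln_le_mono (x y : R) : 0 < x -> x <= y -> ln x <= ln y.
Proof.
move=> x0; case/Rle_lt_or_eq_dec => [xy | <-]; last lra.
exact/Rlt_le/ln_increasing.
Qed.

Lemma ln_le_sub1 (z : R) : 0 < z -> ln z <= z - 1.
Proof.
move=> z0; rewrite -[X in _ <= X]ln_exp; apply: ln_le_mono => //.
have := exp_ineq1_le (z - 1); lra.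
Qed.

Lemma jensen_ln (T : finType) (P : pred T) (u : T -> R) : leq 1 #|P| ->
  \big[Rplus/0]_(x | P x) u x / INR #|P| <=
  ln (\big[Rplus/0]_(x | P x) exp (u x) / INR #|P|).
Proof.
move=> P_gt0; have c0 : 0 < INR #|P| by apply: lt_0_INR; apply/ltP.
set S := \big[Rplus/0]_(x | P x) exp (u x).
have S0 : 0 < S.
  case/card_gt0P: P_gt0 => x0 Px0; rewrite /S (bigD1 x0) //=.
  have : 0 <= \big[Rplus/0]_(i | P i && (i != x0)) exp (u i).
    by apply: rsum_ge0 => i _; apply/Rlt_le/exp_pos.
  have := exp_pos (u x0); lra.
set m := S / INR #|P|.
have m0 : 0 < m by apply: Rdiv_lt_0_compat.
(* the tangent line of ln at m lies above ln *)
have tangent x : u x <= ln m + exp (u x) / m - 1.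
  have := ln_le_sub1 (Rdiv_lt_0_compat _ _ (exp_pos (u x)) m0).
  by rewrite /Rdiv ln_mult ?ln_Rinv ?ln_exp //; [lra | apply: exp_pos | apply: Rinv_0_lt_compat].
have := rsum_le (index_enum T) (fun x (_ : P x) => tangent x); rewrite !rsum_sub big_split /= !rsum_const.
rewrite /Rdiv -rsum_mulr -/S (_ : S * / m = INR #|P|); last by rewrite /m; field; lra.
move=> H; apply: (Rmult_le_reg_r (INR #|P|)) => //.
rewrite Rmult_assoc Rinv_l; lra.
Qed.

Lemma exp_ge_pow (m : nat) (y : R) : 0 <= 1 + y -> (1 + y) ^ m <= exp (INR m * y).
Proof.
move=> y1; have -> : exp (INR m * y) = exp y ^ m.
  elim: m => [|m IH]; first by rewrite /= Rmult_0_l exp_0.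
  by rewrite S_INR Rmult_plus_distr_r Rmult_1_l exp_plus IH /=; ring.
by apply: pow_incr; split => //; apply: exp_ineq1_le.
Qed.

Lemma ln_le_of_pow (x y : R) (m : nat) :
  0 < x -> 0 <= 1 + y -> x <= (1 + y) ^ m -> ln x <= INR m * y.
Proof.
move=> x0 y1 xle; rewrite -[X in _ <= X]ln_exp; apply: ln_le_mono => //.
exact: Rle_trans xle (exp_ge_pow m y1).
Qed.

Lemma ln2_le : ln 2 <= 3 / 4.
Proof.
have -> : 3 / 4 = INR 10 * (3 / 40) by rewrite /=; lra.
by apply: ln_le_of_pow; rewrite /=; lra.
Qed.

Lemma ln3_le : ln 3 <= 10 / 9.
Proof.
have -> : 10 / 9 = INR 100 * (1 / 90) by rewrite /=; lra.
by apply: ln_le_of_pow; rewrite /=; lra.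
Qed.

Lemma ln7_le : ln 7 <= 2.
Proof.
have -> : 2 = INR 40 * (1 / 20) by rewrite /=; lra.
by apply: ln_le_of_pow; rewrite /=; lra.
Qed.

Definition sgn2 (z : 'F_2) : R := if z == GRing.zero then 1 else -1.

Lemma sgn2D (z1 z2 : 'F_2) : sgn2 (GRing.add z1 z2) = sgn2 z1 * sgn2 z2.
Proof. by rewrite /sgn2; case: z1 => [[|[|?]] ?]; case: z2 => [[|[|?]] ?] //=; lra. Qed.

Section Characters.
Variable n : nat.
Implicit Types a b x y : F2n n.
Local Notation Q := (2 ^ n).

Lemma Q_gt0 : 0 < Q.
Proof. apply: pow_lt; lra. Qed.

Lemma ExE (g : F2n n -> R) : Ex g = \big[Rplus/0]_(x : F2n n) g x / Q.
Proof. by []. Qed.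

Lemma card_F2n : INR #|{: F2n n}| = Q.
Proof.
rewrite /F2n card_mx card_Fp // mul1n.
by elim: n => [|m IH] //=; rewrite expnS mult_INR IH.
Qed.

Lemma ipDr a x y : ip a (GRing.add x y) = GRing.add (ip a x) (ip a y).
Proof. by rewrite /ip -big_split /=; apply: eq_bigr => i _; rewrite mxE GRing.mulrDr. Qed.

Lemma ipC a x : ip a x = ip x a.
Proof. by apply: eq_bigr => i _; rewrite GRing.mulrC. Qed.

Lemma chiD a x y : chi a (GRing.add x y) = chi a x * chi a y.
Proof.
change (sgn2 (ip a (GRing.add x y)) = sgn2 (ip a x) * sgn2 (ip a y)).
by rewrite ipDr sgn2D.
Qed.

Lemma chiC a x : chi a x = chi x a.
Proof. by rewrite /chi ipC. Qed.

Lemma chiDl a b x : chi (GRing.add a b) x = chi a x * chi b x.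
Proof. by rewrite chiC chiD -!(chiC x). Qed.

Lemma chi_pm a x : chi a x = 1 \/ chi a x = -1.
Proof. by rewrite /chi; case: ifP; auto. Qed.

Lemma chi_sq a x : chi a x * chi a x = 1.
Proof. by case: (chi_pm a x) => ->; lra. Qed.

Lemma chi0 x : chi GRing.zero x = 1.
Proof. by rewrite /chi /ip big1 ?eqxx // => i _; rewrite mxE GRing.mul0r. Qed.

Lemma addxx x : GRing.add x x = GRing.zero.
Proof. by apply/rowP => i; rewrite !mxE; case: (x ord0 i) => [[|[|?]] ?]; apply/val_inj. Qed.

(* A nontrivial character sums to zero: shifting by a basis vector e_i with
   a_i = 1 flips the sign of every term. *)
Lemma chi_sum a :
  \big[Rplus/0]_(x : F2n n) chi a x = if a == GRing.zero then Q else 0.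
Proof.
case: eqP => [->|/eqP a_nz].
  by under eq_bigr do rewrite chi0; rewrite rsum_const card_F2n Rmult_1_r.
have [i ai] : exists i, a ord0 i != GRing.zero.
  apply/existsP; apply: contraR a_nz => /existsPn a0.
  by apply/eqP/rowP => j; rewrite mxE; apply/eqP; rewrite -[_ == _]negbK a0.
set e := delta_mx ord0 i : F2n n.
have chi_e : chi a e = -1.
  rewrite /chi /ip (bigD1 i) //= big1 ?GRing.addr0.
    by rewrite mxE !eqxx GRing.mulr1 (negbTE ai).
  by move=> j /negbTE ji; rewrite mxE ji andbF GRing.mulr0.
have : \big[Rplus/0]_(x : F2n n) chi a x =
        \big[Rplus/0]_(x : F2n n) chi a (GRing.add x e).
  exact: (reindex_inj (GRing.addIr e)).
under [in X in _ = X -> _]eq_bigr do rewrite chiD chi_e.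
rewrite -rsum_mulr; move: (\big[Rplus/0]_(x : F2n n) chi a x) => S; lra.
Qed.

Lemma chi_orth y z :
  \big[Rplus/0]_(a : F2n n) (chi a y * chi a z) = if y == z then Q else 0.
Proof.
under eq_bigr do rewrite !(chiC _ y) !(chiC _ z) -chiDl.
rewrite chi_sum; congr (if _ then _ else _).
apply/eqP/eqP => [yz0|->]; last exact: addxx.
by rewrite -[z]GRing.add0r -(addxx y) -GRing.addrA yz0 GRing.addr0.
Qed.

Lemma parseval (h : F2n n -> R) :
  \big[Rplus/0]_(a : F2n n) (fhat h a * fhat h a) = Ex (fun x => h x * h x).
Proof.
have Q0 := Q_gt0.
transitivity (\big[Rplus/0]_(a : F2n n) ((\big[Rplus/0]_(y : F2n n)
   \big[Rplus/0]_(z : F2n n) (h y * chi a y * (h z * chi a z))) / (Q * Q))).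
  apply: eq_bigr => a _; rewrite /fhat ExE -rsum_distr.
  by set S := bigop _ _ _; field; lra.
rewrite /Rdiv -rsum_mulr exchange_big /=.
under eq_bigr => y _ do rewrite exchange_big /=.
transitivity ((\big[Rplus/0]_(y : F2n n) (h y * h y * Q)) * / (Q * Q)).
  congr (_ * _); apply: eq_bigr => y _.
  transitivity (\big[Rplus/0]_(z : F2n n) (h y * h z * (if y == z then Q else 0))).
    apply: eq_bigr => z _; rewrite -chi_orth rsum_mull.
    by apply: eq_bigr => a _; ring.
  rewrite (bigD1 y) //= eqxx big1 => [|z /negbTE zy]; last by rewrite eq_sym zy; ring.
  ring.
rewrite ExE /Rdiv rsum_mulr [X in _ = X]rsum_mulr.
by apply: eq_bigr => y _; field; lra.
Qed.

Lemma fhat_shift (h : F2n n -> R) x a :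
  fhat (fun y => h (GRing.add x y)) a = fhat h a * chi a x.
Proof.
rewrite /fhat !ExE [in RHS](reindex_inj (GRing.addrI x)) /=.
have -> : \big[Rplus/0]_(y : F2n n) (h (GRing.add x y) * chi a (GRing.add x y)) =
          chi a x * \big[Rplus/0]_(y : F2n n) (h (GRing.add x y) * chi a y).
  by rewrite rsum_mull; apply: eq_bigr => y _; rewrite chiD; ring.
move: (chi_sq a x); set c := chi a x; set S := bigop _ _ _.
move=> c2; transitivity (S / Q * (c * c)); [by rewrite c2; ring | rewrite /Rdiv; ring].
Qed.

Lemma fhat_sub (g h : F2n n -> R) a :
  fhat (fun y => g y - h y) a = fhat g a - fhat h a.
Proof.
rewrite /fhat !ExE /Rdiv -Rmult_minus_distr_r -rsum_sub; congr (_ * _).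
by apply: eq_bigr => y _; ring.
Qed.

End Characters.

Section MessageClasses.
Variables (T : finType) (U : eqType) (M : T -> U).
Implicit Types (x y : T) (phi h : T -> R).

Definition class_size x : nat := #|[pred y | M y == M x]|.

(* Average of phi over the message class of x, i.e. E[phi | M] at x. *)
Definition cond_avg phi x : R :=
  \big[Rplus/0]_(y | M y == M x) phi y / INR (class_size x).

Lemma class_size_gt0 x : leq 1 (class_size x).
Proof. by apply/card_gt0P; exists x; rewrite inE. Qed.

Lemma class_size_gt0R x : 0 < INR (class_size x).
Proof. exact/lt_0_INR/ltP/class_size_gt0. Qed.

Lemma class_size_eq x y : M x = M y -> class_size x = class_size y.
Proof. by rewrite /class_size => ->. Qed.

Lemma cond_avgZ c phi x : cond_avg (fun y => c * phi y) x = c * cond_avg phi x.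
Proof. by rewrite /cond_avg -rsum_mull /Rdiv Rmult_assoc. Qed.

Lemma cond_avg_bound phi x : (forall y, -1 <= phi y <= 1) -> -1 <= cond_avg phi x <= 1.
Proof.
move=> phi1; have c0 := class_size_gt0R x.
have card_sum c : \big[Rplus/0]_(y | M y == M x) c = INR (class_size x) * c.
  by rewrite rsum_const.
have up : \big[Rplus/0]_(y | M y == M x) phi y <= INR (class_size x).
  rewrite -[X in _ <= X]Rmult_1_r -card_sum; apply: rsum_le => y _; have := phi1 y; lra.
have lo : INR (class_size x) * -1 <= \big[Rplus/0]_(y | M y == M x) phi y.
  rewrite -card_sum; apply: rsum_le => y _; have := phi1 y; lra.
rewrite /cond_avg; move: up lo c0; move: (bigop _ _ _) (INR _) => S c up lo c0.
by split; apply: (Rmult_le_reg_r c) => //; rewrite /Rdiv Rmult_assoc Rinv_l; lra.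
Qed.

Lemma sum_mul_cond_avg h phi : (forall x y, M x = M y -> h x = h y) ->
  \big[Rplus/0]_(x : T) (h x * cond_avg phi x) = \big[Rplus/0]_(x : T) (h x * phi x).
Proof.
move=> hM.
transitivity (\big[Rplus/0]_(x : T) \big[Rplus/0]_(y : T)
   (if M y == M x then h x * phi y / INR (class_size x) else 0)).
  apply: eq_bigr => x _; rewrite /cond_avg /Rdiv rsum_mulr rsum_mull big_mkcond /=.
  by apply: eq_bigr => y _; case: ifP => _; lra.
rewrite exchange_big /=; apply: eq_bigr => y _.
transitivity (\big[Rplus/0]_(x | M x == M y) (h y * phi y / INR (class_size y))).
  rewrite [in RHS]big_mkcond /=; apply: eq_bigr => x _.
  rewrite eq_sym; case: eqP => [Exy|] //.
  by rewrite (hM _ _ Exy) (class_size_eq Exy).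
rewrite rsum_const -/(class_size y); have c0 := class_size_gt0R y.
by move: (h y * phi y) => v; field; lra.
Qed.

(* Pythagoras: E[phi | M] is the best approximation of phi by a function h
   of the message, losing exactly sum phi^2 - sum E[phi | M]^2. *)
Lemma cond_avg_best h phi : (forall x y, M x = M y -> h x = h y) ->
  \big[Rplus/0]_(x : T) (phi x * phi x) -
  \big[Rplus/0]_(x : T) (cond_avg phi x * cond_avg phi x)
  <= \big[Rplus/0]_(x : T) ((h x - phi x) * (h x - phi x)).
Proof.
move=> hM.
have E : \big[Rplus/0]_(x : T) ((h x - phi x) * (h x - phi x)) =
    \big[Rplus/0]_(x : T) ((h x - cond_avg phi x) * (h x - cond_avg phi x))
  + (\big[Rplus/0]_(x : T) (phi x * phi x) -
     \big[Rplus/0]_(x : T) (cond_avg phi x * cond_avg phi x))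
  + 2 * (\big[Rplus/0]_(x : T) (h x * cond_avg phi x) -
         \big[Rplus/0]_(x : T) (h x * phi x)).
  by rewrite -!rsum_sub rsum_mull -!big_split /=; apply: eq_bigr => x _; ring.
have sq0 : 0 <= \big[Rplus/0]_(x : T) ((h x - cond_avg phi x) * (h x - cond_avg phi x)).
  by apply: rsum_ge0 => x _; apply: Rle_0_sqr.
by rewrite E (sum_mul_cond_avg phi hM); lra.
Qed.

Definition messages : seq U := undup (map M (enum T)).

Lemma sum_inv_class_size :
  \big[Rplus/0]_(x : T) / INR (class_size x) = INR (size messages).
Proof.
have in_messages x : M x \in messages by rewrite mem_undup map_f ?mem_enum.
transitivity (\big[Rplus/0]_(x : T) \big[Rplus/0]_(u <- messages)
   (if u == M x then / INR (class_size x) else 0)).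
  apply: eq_bigr => x _; rewrite -big_mkcond -big_filter rsum_const_seq size_filter.
  by rewrite (count_uniq_mem (M x) (undup_uniq _)) in_messages /=; lra.
rewrite exchange_big /= -[X in _ = X]Rmult_1_r -rsum_const_seq.
apply: eq_big_seq => u; rewrite mem_undup => /mapP [x0 _ ->].
rewrite -big_mkcond /=.
transitivity (\big[Rplus/0]_(x | M x0 == M x) / INR (class_size x0)).
  by apply: eq_bigr => x /eqP Ex0x; rewrite (class_size_eq Ex0x).
rewrite rsum_const (_ : #|_| = class_size x0); last first.
  by apply: eq_card => x; rewrite !inE eq_sym.
by have c0 := class_size_gt0R x0; field; lra.
Qed.

End MessageClasses.

(* Counting bit strings: there are fewer than 2^(d+1) strings of length <= d.
   A string s is encoded injectively as the nonzero (d+1)-bit word s ++ 1 ++ 0...0. *)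

Section ShortStrings.
Variable d : nat.

Definition pad (s : seq bool) : seq bool := mkseq (nth false (rcons s true)) d.+1.

Lemma size_pad (s : seq bool) : size (pad s) == d.+1.
Proof. by rewrite size_mkseq. Qed.

Lemma pad_inj (s t : seq bool) :
  leq (size s) d -> leq (size t) d -> pad s = pad t -> s = t.
Proof.
move=> sd td st.
have nth_st i : leq i d -> nth false (rcons s true) i = nth false (rcons t true) i.
  by move=> id; have := congr1 (fun u => nth false u i) st; rewrite /pad !nth_mkseq.
(* the terminating 1 sits at position size s, resp. size t *)
have size_st : size s = size t.
  case: (ltngtP (size s) (size t)) => // [lt_st | lt_ts].
  - have := nth_st _ td; rewrite !nth_rcons ltnn eqxx ltnNge (ltnW lt_st) /=.
    by rewrite (gtn_eqF lt_st).
  - have := nth_st _ sd; rewrite !nth_rcons ltnn eqxx ltnNge (ltnW lt_ts) /=.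
    by rewrite (gtn_eqF lt_ts).
apply: (@eq_from_nth _ false) => // i lt_is.
by have := nth_st i (leq_trans (ltnW lt_is) sd); rewrite !nth_rcons lt_is -size_st lt_is.
Qed.

Lemma pad_neq0 (s : seq bool) : leq (size s) d -> pad s != nseq d.+1 false.
Proof.
move=> sd; apply/eqP => /(congr1 (fun u => nth false u (size s))).
by rewrite /pad nth_mkseq ?nth_nseq ?ltnS ?sd // nth_rcons ltnn eqxx.
Qed.

Lemma count_short_strings (S : seq (seq bool)) :
  uniq S -> (forall s, s \in S -> leq (size s) d) -> leq (size S).+1 (expn 2 d.+1).
Proof.
move=> uS Sd; pose enc (s : seq bool) : d.+1.-tuple bool := Tuple (size_pad s).
have enc_inj : {in S &, injective enc}.
  by move=> s t sS tS /(congr1 val); apply: pad_inj; apply: Sd.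
have enc_neq0 : {subset map enc S <= enum (predC1 [tuple of nseq d.+1 false])}.
  move=> w /mapP [s sS ->]; rewrite mem_enum !inE.
  by apply: contra (pad_neq0 (Sd s sS)) => /eqP/(congr1 val) /= ->.
have uE : uniq (map enc S) by rewrite map_inj_in_uniq.
have := uniq_leq_size uE enc_neq0.
rewrite size_map -cardE cardC1 card_tuple card_bool.
by case: (expn 2 d.+1) (expn_gt0 2 d.+1).
Qed.

End ShortStrings.

Section Retained.
Variable n : nat.
Local Notation Q := (2 ^ n).
Implicit Types (a x y : F2n n).

Definition retained (U : eqType) (M : F2n n -> U) a : R :=
  Ex (fun x => cond_avg M (chi a) x * cond_avg M (chi a) x).

Lemma retained_bound (U : eqType) (M : F2n n -> U) a : 0 <= retained M a <= 1.
Proof.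
have Q0 := Q_gt0 n; have Qi : 0 < / Q by apply: Rinv_0_lt_compat.
rewrite /retained ExE /Rdiv; split.
  by apply: Rmult_le_pos; [apply: rsum_ge0 => x _; apply: Rle_0_sqr | lra].
rewrite -(Rinv_r Q); last lra.
apply: Rmult_le_compat_r; first lra.
rewrite -(card_F2n n) -[X in _ <= X]Rmult_1_r -rsum_const; apply: rsum_le => x _.
have chi1 y : -1 <= chi a y <= 1 by case: (chi_pm a y) => ->; lra.
by have := cond_avg_bound M x chi1; nra.
Qed.

Variables (f : F2n n -> R) (M : F2n n -> seq bool) (B : seq bool -> F2n n -> R).

(* Conditionally on Alice's input x, Bob's mean squared error is, by Parseval,
   a sum over frequencies of (Bob's coefficient - fhat(a) chi_a(x))^2. *)
Lemma err_fourier x :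
  Ex (fun y => (B (M x) y - xorf f x y) ^ 2) =
  \big[Rplus/0]_(a : F2n n) ((fhat (B (M x)) a - fhat f a * chi a x) *
                             (fhat (B (M x)) a - fhat f a * chi a x)).
Proof.
transitivity (Ex (fun y => (B (M x) y - f (GRing.add x y)) *
                          (B (M x) y - f (GRing.add x y)))).
  by rewrite !ExE; congr (_ / _); apply: eq_bigr => y _; rewrite /xorf; ring.
by rewrite -parseval; apply: eq_bigr => a _; rewrite fhat_sub fhat_shift.
Qed.

(* Bob's coefficient at a depends on x only through the message M x, so it
   cannot beat the conditional average of fhat(a) chi_a. *)
Lemma err_frequency a :
  fhat f a * fhat f a * (1 - retained M a) <=
  Ex (fun x => (fhat (B (M x)) a - fhat f a * chi a x) *
               (fhat (B (M x)) a - fhat f a * chi a x)).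
Proof.
have Q0 := Q_gt0 n; set c := fhat f a.
have hM x y : M x = M y -> fhat (B (M x)) a = fhat (B (M y)) a by move=> ->.
have best := cond_avg_best (fun x => c * chi a x) hM.
have sq_chi : \big[Rplus/0]_(x : F2n n) (c * chi a x * (c * chi a x)) = c * c * Q.
  rewrite -(card_F2n n) [_ * INR _]Rmult_comm -rsum_const.
  by apply: eq_bigr => x _; have := chi_sq a x; nra.
have sq_avg : \big[Rplus/0]_(x : F2n n)
     (cond_avg M (fun y => c * chi a y) x * cond_avg M (fun y => c * chi a y) x) =
   c * c * (retained M a * Q).
  have -> : retained M a * Q =
      \big[Rplus/0]_(x : F2n n) (cond_avg M (chi a) x * cond_avg M (chi a) x).
    by rewrite /retained ExE; move: (bigop _ _ _) => S; field; lra.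
  by rewrite rsum_mull; apply: eq_bigr => x _; rewrite cond_avgZ; ring.
rewrite sq_chi sq_avg ExE in best *.
move: best; move: (bigop _ _ _) (retained M a) => S r best.
apply: (Rmult_le_reg_r Q) => //; have -> : S / Q * Q = S by field; lra.
nra.
Qed.

Lemma err_bound :
  \big[Rplus/0]_(a : F2n n) (fhat f a * fhat f a * (1 - retained M a)) <=
  proto_err f M B.
Proof.
have Q0 := Q_gt0 n.
rewrite /proto_err ExE; under [in X in _ <= X]eq_bigr do rewrite err_fourier.
rewrite exchange_big /= /Rdiv rsum_mulr; apply: rsum_le => a _.
by have := err_frequency a; rewrite ExE /Rdiv.
Qed.

End Retained.

Lemma exp_rsum (I : Type) (r : seq I) (F : I -> R) :
  exp (\big[Rplus/0]_(i <- r) F i) = \big[Rmult/1]_(i <- r) exp (F i).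
Proof.
elim: r => [|i r IH]; first by rewrite !big_nil exp_0.
by rewrite !big_cons exp_plus IH.
Qed.

Lemma prod_cosh_le (I : Type) (r : seq I) (b : I -> R) :
  \big[Rmult/1]_(i <- r) cosh (b i) <= exp (\big[Rplus/0]_(i <- r) (b i * b i) / 2).
Proof.
have cosh_ge0 t : 0 <= cosh t by rewrite /cosh; have := exp_pos t; have := exp_pos (- t); lra.
elim: r => [|i r IH]; first by rewrite !big_nil /Rdiv Rmult_0_l exp_0; lra.
rewrite !big_cons /Rdiv Rmult_plus_distr_r exp_plus.
apply: Rmult_le_compat => //; last exact: CoshBound.cosh_le_exp_sq.
by elim: r {IH} => [|j r IHr]; rewrite ?big_nil ?big_cons; [lra | apply: Rmult_le_pos].
Qed.

Section LevelOne.
Variable n : nat.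
Local Notation Q := (2 ^ n).
Implicit Types (a c x y : F2n n) (Y : seq (F2n n)).

Lemma exp_chi t a y : exp (t * chi a y) = cosh t + chi a y * sinh t.
Proof.
rewrite /cosh /sinh; case: (chi_pm a y) => ->; first by rewrite Rmult_1_r; lra.
by rewrite (_ : t * -1 = - t); lra.
Qed.

(* It is proved jointly with the vanishing of all its Fourier coefficients
   outside span Y. *)
Lemma sum_prod_exp_chi (b : F2n n -> R) Y : free Y ->
  (forall c, c \notin span Y ->
     \big[Rplus/0]_(y : F2n n) (chi c y * \big[Rmult/1]_(a <- Y) exp (b a * chi a y)) = 0) /\
  \big[Rplus/0]_(y : F2n n) \big[Rmult/1]_(a <- Y) exp (b a * chi a y) =
  Q * \big[Rmult/1]_(a <- Y) cosh (b a).
Proof.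
elim: Y => [|v Y IH].
  move=> _; split.
    move=> c; rewrite span_nil memv0 => /negbTE c_nz.
    by under eq_bigr do rewrite big_nil Rmult_1_r; rewrite chi_sum c_nz.
  rewrite [in RHS]big_nil; under eq_bigr do rewrite big_nil.
  by rewrite rsum_const card_F2n.
rewrite free_cons => /andP [vY fY]; have [IH_orth IH_sum] := IH fY.
set F := fun Z y => \big[Rmult/1]_(a <- Z) exp (b a * chi a y).
have step c : \big[Rplus/0]_(y : F2n n) (chi c y * F (v :: Y) y) =
   cosh (b v) * \big[Rplus/0]_(y : F2n n) (chi c y * F Y y) +
   sinh (b v) * \big[Rplus/0]_(y : F2n n) (chi (GRing.add c v) y * F Y y).
  rewrite !rsum_mull -big_split /=; apply: eq_bigr => y _.
  by rewrite /F big_cons exp_chi chiDl; ring.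
have sub_span : (span Y <= span (v :: Y))%VS.
  by apply: sub_span => z zY; rewrite inE zY orbT.
have v_span : v \in span (v :: Y) by apply: memv_span; rewrite inE eqxx.
have chi0F Z : \big[Rplus/0]_(y : F2n n) (chi GRing.zero y * F Z y) =
               \big[Rplus/0]_(y : F2n n) F Z y.
  by apply: eq_bigr => y _; rewrite chi0 Rmult_1_l.
split.
  move=> c cY; rewrite -/(F _ _) step !IH_orth; first ring.
    apply: contra cY => cvY; rewrite -(GRing.addrK v c).
    by apply: memvB => //; apply: (subvP sub_span).
  by apply: contra cY; apply: (subvP sub_span).
by have := step GRing.zero; rewrite !chi0F GRing.add0r IH_orth // IH_sum big_cons => ->; ring.
Qed.

Variables (U : eqType) (M : F2n n -> U).

(* Apply Jensen to the linear form L = sum_a avg_a chi_a on the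
   class, and bound E exp L over all of F_2^n by the factorization above. *)
Lemma level1_class x Y : free Y ->
  \big[Rplus/0]_(a <- Y) (cond_avg M (chi a) x * cond_avg M (chi a) x) <=
  2 * ln (Q / INR (class_size M x)).
Proof.
move=> fY; have Q0 := Q_gt0 n.
set b := fun a => cond_avg M (chi a) x; set c := INR (class_size M x).
have c0 : 0 < c := class_size_gt0R M x.
set Bs := \big[Rplus/0]_(a <- Y) (b a * b a).
set L := fun y => \big[Rplus/0]_(a <- Y) (b a * chi a y).
have mean_L : \big[Rplus/0]_(y | M y == M x) L y / INR #|[pred y | M y == M x]| = Bs.
  rewrite -/(class_size M x) -/c /L exchange_big /= /Rdiv rsum_mulr.
  by apply: eq_bigr => a _; rewrite -rsum_mull /b /cond_avg /Rdiv Rmult_assoc.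
have sum_expL : \big[Rplus/0]_(y | M y == M x) exp (L y) <= Q * exp (Bs / 2).
  apply: Rle_trans (_ : \big[Rplus/0]_(y | predT y) exp (L y) <= _).
    by apply: rsum_le_subpred => // y; apply/Rlt_le/exp_pos.
  under eq_bigr do rewrite /L exp_rsum.
  rewrite (proj2 (sum_prod_exp_chi b fY)).
  by apply: Rmult_le_compat_l; [lra | apply: prod_cosh_le].
have := jensen_ln L (class_size_gt0 M x); rewrite mean_L -/(class_size M x) -/c.
move=> jensen; have {jensen} : Bs <= ln (Q * exp (Bs / 2) / c).
  apply: Rle_trans jensen _; apply: ln_le_mono.
    apply: Rdiv_lt_0_compat => //; rewrite (bigD1 x) //=.
    apply: Rplus_lt_le_0_compat; first exact: exp_pos.
    by apply: rsum_ge0 => y _; apply/Rlt_le/exp_pos.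
  by rewrite /Rdiv; apply: Rmult_le_compat_r => //; apply/Rlt_le/Rinv_0_lt_compat.
rewrite (_ : Q * exp (Bs / 2) / c = Q / c * exp (Bs / 2)); last by field; lra.
rewrite ln_mult ?ln_exp; [lra | exact: Rdiv_lt_0_compat | exact: exp_pos].
Qed.

(* Level-1 inequality: averaging over x with Jensen and counting messages. *)
Lemma level1_sum Y : free Y ->
  \big[Rplus/0]_(a <- Y) retained M a <= 2 * ln (INR (size (messages M))).
Proof.
move=> fY; have Q0 := Q_gt0 n; have Qi : 0 < / Q by apply: Rinv_0_lt_compat.
set lnc := fun x => ln (Q / INR (class_size M x)).
have lhsE : \big[Rplus/0]_(a <- Y) retained M a =
    (\big[Rplus/0]_(x : F2n n) \big[Rplus/0]_(a <- Y)
       (cond_avg M (chi a) x * cond_avg M (chi a) x)) / Q.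
  rewrite exchange_big /= /Rdiv rsum_mulr.
  by apply: eq_bigr => a _; rewrite /retained ExE.
have pointwise : \big[Rplus/0]_(x : F2n n) \big[Rplus/0]_(a <- Y)
       (cond_avg M (chi a) x * cond_avg M (chi a) x) <=
    2 * \big[Rplus/0]_(x : F2n n) lnc x.
  by rewrite rsum_mull; apply: rsum_le => x _; apply: level1_class.
have jensen : \big[Rplus/0]_(x : F2n n) lnc x / Q <=
              ln (\big[Rplus/0]_(x : F2n n) exp (lnc x) / Q).
  have := jensen_ln (P := predT) lnc; rewrite (_ : INR #|_| = Q) /=; last first.
    by rewrite -(card_F2n n); congr INR; apply: eq_card.
  by apply; apply/card_gt0P; exists GRing.zero.
have count : \big[Rplus/0]_(x : F2n n) exp (lnc x) / Q = INR (size (messages M)).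
  rewrite -sum_inv_class_size /Rdiv rsum_mulr; apply: eq_bigr => x _.
  have c0 := class_size_gt0R M x.
  by rewrite /lnc exp_ln; [field; lra | apply: Rdiv_lt_0_compat].
rewrite lhsE -count; move: pointwise jensen.
move: (bigop _ _ _) (\big[Rplus/0]_(x : F2n n) lnc x) => S1 S2; rewrite /Rdiv; nra.
Qed.

End LevelOne.

Lemma INR_expn2 (k : nat) : INR (expn 2 k) = 2 ^ k.
Proof. by elim: k => [|k IH] //; rewrite expnS mult_INR IH /=; ring. Qed.

Lemma ln_messages_le (N : R) (d : nat) :
  1 <= N -> N + 1 <= 2 ^ d.+1 -> leq 2 d -> ln N <= INR d.
Proof.
move=> N1 Nd; case: d Nd => [|[|[|d]]] // Nd _.
  by apply: Rle_trans ln7_le; apply: ln_le_mono; rewrite /= in Nd |- *; lra.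
apply: Rle_trans (_ : ln (2 ^ d.+4) <= _); first by apply: ln_le_mono; lra.
rewrite ln_pow; last lra.
by have := ln2_le; have := pos_INR d; rewrite !S_INR; nra.
Qed.

Lemma dim_bound_arith (d k : nat) (N delta : R) :
  1 <= N -> N + 1 <= 2 ^ d.+1 -> 0 < delta <= 1 / 2 ->
  INR k * delta <= (1 + 2 * delta) * ln N -> delta / 2 * INR k <= INR d.
Proof.
move=> N1 Nd delta01 hk.
have lnN0 : 0 <= ln N by rewrite -ln_1; apply: ln_le_mono; lra.
have k0 := pos_INR k.
case: d Nd => [|[|d]] Nd.
-
  have : ln N <= 0 by rewrite -ln_1; apply: ln_le_mono; rewrite /= in Nd; lra.
  by rewrite /=; nra.
-
  have lnN : ln N <= 10 / 9.
    by apply: Rle_trans ln3_le; apply: ln_le_mono; rewrite /= in Nd; lra.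
  rewrite /=; case: (leqP k 4) => [k4 | k5].
    have : INR k <= INR 4 by apply/le_INR/leP.
    by rewrite (_ : INR 4 = 4); [nra | rewrite /=; lra].
  have : INR 5 <= INR k by apply/le_INR/leP.
  rewrite (_ : INR 5 = 5); last by rewrite /=; lra.
  move=> k5R; have : delta <= 2 / 5 by nra.
  nra.
- have := ln_messages_le N1 Nd isT; nra.
Qed.

Lemma free_subseq (K : fieldType) (vT : vectType K) (X : seq vT) :
  exists Y : seq vT, {subset Y <= X} /\ free Y /\ (span Y = span X)%VS.
Proof.
elim: X => [|v X [Y [YX [fY YXspan]]]]; first by exists [::]; rewrite nil_free.
case vX: (v \in span X).
  exists Y; split; first by move=> z /YX zX; rewrite inE zX orbT.
  by split => //; rewrite span_cons YXspan; apply/esym/addv_idPr; rewrite -memvE.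
exists (v :: Y); split; first by move=> z; rewrite !inE => /orP [-> | /YX ->]; rewrite ?orbT.
by split; [rewrite free_cons YXspan vX fY | rewrite !span_cons YXspan].
Qed.

Section Heavy.
Variables (n : nat) (U : eqType) (M : F2n n -> U).

Definition heavy (s : R) : seq (F2n n) :=
  [seq a <- enum {: F2n n} | if Rle_dec s (retained M a) then true else false].

Lemma heavy_weight (f : F2n n -> R) (s : R) : s < 1 ->
  (1 - s) * (norm2sq f - fweight f (span (heavy s))) <=
  \big[Rplus/0]_(a : F2n n) (fhat f a * fhat f a * (1 - retained M a)).
Proof.
move=> s1; set F := fun a => fhat f a * fhat f a.
set hb := fun a => if Rle_dec s (retained M a) then true else false.
have F0 a : 0 <= F a by apply: Rle_0_sqr.
have on_heavy : \big[Rplus/0]_(a | hb a) F a <= fweight f (span (heavy s)).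
  apply: rsum_le_subpred => // a ha; apply: memv_span.
  by rewrite mem_filter -/(hb a) ha mem_enum.
have split_norm : norm2sq f = \big[Rplus/0]_(a | hb a) F a + \big[Rplus/0]_(a | ~~ hb a) F a.
  by rewrite /norm2sq -parseval (bigID hb).
have light : (1 - s) * \big[Rplus/0]_(a | ~~ hb a) F a <=
    \big[Rplus/0]_(a | ~~ hb a) (F a * (1 - retained M a)).
  rewrite rsum_mull; apply: rsum_le => a; rewrite /hb.
  by case: Rle_dec => // /Rnot_le_lt light_a _; have := F0 a; nra.
have all : \big[Rplus/0]_(a | ~~ hb a) (F a * (1 - retained M a)) <=
    \big[Rplus/0]_(a | predT a) (F a * (1 - retained M a)).
  apply: rsum_le_subpred => // a.
  by have := F0 a; have := retained_bound M a; nra.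
move: on_heavy split_norm light all; rewrite /F.
move: (fweight _ _) (bigop _ _ _) (bigop _ _ _) (bigop _ _ _) (bigop _ _ _).
move=> w S1 S2 S3 S4; nra.
Qed.

Lemma heavy_dim (s : R) :
  INR (\dim (span (heavy s))) * s <= 2 * ln (INR (size (messages M))).
Proof.
have [Y [Yheavy [fY YHspan]]] := free_subseq (heavy s).
rewrite -YHspan (eqP fY) -rsum_const_seq; apply: Rle_trans (level1_sum M fY).
apply: rsum_le_seq => a /Yheavy; rewrite mem_filter.
by case: Rle_dec.
Qed.

End Heavy.

Section ProtocolBound.
Variables (n : nat) (f : F2n n -> R).

Lemma messages_count (M : F2n n -> seq bool) :
  1 <= INR (size (messages M)) /\ INR (size (messages M)) + 1 <= 2 ^ (cost M).+1.
Proof.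
split.
  apply: (le_INR 1); apply/leP; rewrite lt0n; apply/nilP => M_nil.
  have : M GRing.zero \in messages M by rewrite mem_undup map_f ?mem_enum.
  by rewrite M_nil.
rewrite -INR_expn2 -S_INR; apply/le_INR/leP.
apply: count_short_strings; first exact: undup_uniq.
by move=> s; rewrite mem_undup => /mapP [x _ ->]; apply: leq_bigmax.
Qed.

Lemma protocol_bound (M : F2n n -> seq bool) (B : seq bool -> F2n n -> R)
    (eps delta : R) :
  0 < delta <= 1 / 2 -> proto_err f M B <= eps ->
  exists A : {vspace F2n n},
    norm2sq f - eps * (1 + 2 * delta) <= fweight f A /\
    delta / 2 * INR (\dim A) <= INR (cost M).
Proof.
move=> delta01 err_eps; set sigma := 2 * delta / (1 + 2 * delta).
have sigma_lt1 : sigma < 1.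
  have -> : sigma = 1 - / (1 + 2 * delta) by rewrite /sigma; field; lra.
  suff : 0 < / (1 + 2 * delta) by lra.
  by apply: Rinv_0_lt_compat; lra.
have one_sigma : (1 - sigma) * (1 + 2 * delta) = 1 by rewrite /sigma; field; lra.
exists (span (heavy M sigma)); split.
  have := heavy_weight M f sigma_lt1; have := err_bound f M B.
  move: (bigop _ _ _) (fweight _ _) => S w S_err wS.
  have : (norm2sq f - w) * ((1 - sigma) * (1 + 2 * delta)) <= eps * (1 + 2 * delta).
    by rewrite -Rmult_assoc (Rmult_comm _ (1 - sigma)); apply: Rmult_le_compat_r; lra.
  by rewrite one_sigma; lra.
have [N1 Nd] := messages_count M.
apply: (dim_bound_arith N1 Nd delta01).
have := heavy_dim M sigma; move: (INR _) (ln _) => k l dim_k.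
have : k * sigma * (1 + 2 * delta) = k * (2 * delta).
  by rewrite /sigma; field; lra.
nra.
Qed.

(* Bob can compute f^+ exactly if Alice sends her whole input. *)
Lemma exact_protocol :
  exists (M : F2n n -> seq bool) (B : seq bool -> F2n n -> R), proto_err f M B = 0.
Proof.
exists (fun x => nseq (enum_rank x) true).
exists (fun s y => f (GRing.add (nth GRing.zero (enum {: F2n n}) (size s)) y)).
have zero_mean (g : F2n n -> R) : (forall x, g x = 0) -> Ex g = 0.
  by move=> g0; rewrite ExE big1 => [|x _]; [rewrite /Rdiv Rmult_0_l | apply: g0].
rewrite /proto_err; apply: (zero_mean) => x; apply: (zero_mean) => y.
by rewrite size_nseq nth_enum_rank /xorf Rminus_diag /= Rmult_0_l.
Qed.

End ProtocolBound.

Lemma ex_minimal (P : nat -> Prop) :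
  (exists m, P m) -> exists m, P m /\ (forall k, P k -> leq m k).
Proof.
move=> exP.
have [m [[Pm min_m] _]] :=
  @dec_inh_nat_subset_has_unique_least_element P (fun k => classic (P k)) exP.
by exists m; split => // k /min_m /leP.
Qed.

Unset Implicit Arguments.
Set Strict Implicit.

Theorem mainTheorem2 (n : nat) (hn : leq 1 n) (f : F2n n -> R)
    (eps delta : R) (heps : (0 < eps))
    (hdelta : (0 < delta /\ delta <= 1 / 2))
    (hxi : (0 < norm2sq f - eps * (1 + 2 * delta))) :
  exists (d k : nat),
    is_D1wayU f eps d /\
    is_approx_fdim f (norm2sq f - eps * (1 + 2 * delta)) k /\
    (delta / 2 * INR k <= INR d).
Proof.
set xi := norm2sq f - eps * (1 + 2 * delta).
have [d [[M [B [costM errM]]] min_d]] :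
    exists d, (exists M B, cost M = d /\ proto_err f M B <= eps) /\
      (forall d', (exists M B, cost M = d' /\ proto_err f M B <= eps) -> leq d d').
  apply: ex_minimal; have [M [B err0]] := exact_protocol f.
  by exists (cost M), M, B; split => //; lra.
have [A [wA dimA]] := protocol_bound hdelta errM.
have [k [[A0 [dimA0 wA0]] min_k]] :
    exists k, (exists A0 : {vspace F2n n}, \dim A0 = k /\ xi <= fweight f A0) /\
      (forall k', (exists A0 : {vspace F2n n}, \dim A0 = k' /\ xi <= fweight f A0) ->
                  leq k k').
  by apply: ex_minimal; exists (\dim A), A.
exists d, k; split; [|split].
- split; first by exists M, B.
  by move=> M' B' err'; apply: min_d; exists M', B'.
- split; first by exists A0.
  by move=> A1 wA1; apply: min_k; exists A1.
- have kA : leq k (\dim A) by apply: min_k; exists A.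
  have := le_INR _ _ (elimT leP kA); rewrite -costM; case: hdelta; nra.
Qed.
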